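(* Let $n,T\ge1$, $\beta^1,\beta^2\in(0,1)$, and let $\mathcal{V}$ denote the set of all finite products $U_r\cdots U_1$ ($r\ge1$) of matrices $U_s\in\mathcal{S}$. Then: (i) $W$ is invariant under every $H\in\mathcal{V}$; (ii) $\|H\mathbf{z}\|\le\|\mathbf{z}\|$ for all $H\in\mathcal{V}$ and $\mathbf{z}\in W$; (iii) if $Y=U_r\cdots U_1\in\mathcal{V}$ is a product in which at least one factor equals $\begin{bmatrix}E^1&0\\0&I\end{bmatrix}$ and at least one factor equals $\begin{bmatrix}I&0\\0&E^2\end{bmatrix}$, then $\|Y\mathbf{z}\|<\|\mathbf{z}\|$ for every non-zero $\mathbf{z}\in W$.
   Context: $\mathbf{e}\in\mathbb{R}^n$ is the all-ones vector. For $j=1,2$ and $b\in\{\beta^j,1\}^n$, $A_b=\operatorname{diag}(b)+\frac1n\mathbf{e}(\mathbf{e}-b)^\top$; $\mathcal{F}^j=\{A_b:b\in\{\beta^j,1\}^n\}$; $B^j=\beta^jI+\frac{1-\beta^j}{n}\mathbf{e}\mathbf{e}^\top$. For $A\in\mathcal{F}^j$, $D(A)\in\mathbb{R}^{Tn\times Tn}$ is the $T\times T$ block matrix with: block row 1 equal to $(A,0,\dots,0)$; block row 2 (if $T\ge2$) equal to $(\tfrac12(A+I),0,\dots,0)$; for $3\le\ell\le T$, block row $\ell$ has $\tfrac1\ell A$ in block column 1, $\tfrac{\ell-1}{\ell}I$ in block column $\ell-1$, zeros elsewhere. $\mathcal{Q}^j=\{D(A):A\in\mathcal{F}^j\}$,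 $E^j=D(B^j)$. $\mathcal{S}$ is the set of all $2Tn\times2Tn$ matrices $\begin{bmatrix}D^1&0\\0&I\end{bmatrix}$ ($D^1\in\mathcal{Q}^1$) and $\begin{bmatrix}I&0\\0&D^2\end{bmatrix}$ ($D^2\in\mathcal{Q}^2$). For $\mathbf{z}^j=((\mathbf{z}^j_1)^\top,\dots,(\mathbf{z}^j_T)^\top)^\top\in\mathbb{R}^{Tn}$, $\|\mathbf{z}^j\|_T=\max_t\|\mathbf{z}^j_t\|_1$, and for $\mathbf{z}=(\mathbf{z}^1,\mathbf{z}^2)$, $\|\mathbf{z}\|=\max\{\|\mathbf{z}^1\|_T,\|\mathbf{z}^2\|_T\}$. $W=\{(\mathbf{z}^1,\mathbf{z}^2):\mathbf{e}^\top\mathbf{z}^1_t=\mathbf{e}^\top\mathbf{z}^2_t=0,\ t=1,\dots,T\}$. *)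

From HB Require Import structures.
From mathcomp Require Import all_boot all_order all_algebra.
Set Implicit Arguments. Unset Strict Implicit. Unset Printing Implicit Defensive.
Import Order.TTheory GRing.Theory Num.Theory.
Local Open Scope ring_scope.

Section Defs.
Variable R : realFieldType.

(* size of the stacked vector z^j = (z^j_1, ..., z^j_T), each z^j_t in R^n *)
Definition stk (T n : nat) : nat := (\sum_(t < T) (fun _ : 'I_T => n) t)%N.

Definition evec (n : nat) : 'cV[R]_n := const_mx 1.

Definition Amat (n : nat) (b : 'rV[R]_n) : 'M[R]_n :=
  diag_mx b + (n%:R)^-1 *: (evec n *m (const_mx 1 - b)).

Definition inF (n : nat) (beta : R) (A : 'M[R]_n) : Prop :=
  exists b : 'rV[R]_n, (forall i, b 0 i = beta \/ b 0 i = 1) /\ A = Amat b.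

Definition Bmat (n : nat) (beta : R) : 'M[R]_n :=
  beta *: 1%:M + ((1 - beta) / n%:R) *: (evec n *m (evec n)^T).

(* blocks of D(A), with 0-based block indices l (row) and c (column):
   block row 1: (A,0,...,0); block row 2: ((A+I)/2,0,...,0);
   block row l+1 >= 3: A/(l+1) in column 1, l/(l+1) I in column l, 0 elsewhere *)
Definition Dblk (T n : nat) (A : 'M[R]_n) (l c : 'I_T) : 'M[R]_n :=
  if (l == 0%N :> nat) then (if (c == 0%N :> nat) then A else 0)
  else if (l == 1%N :> nat) then (if (c == 0%N :> nat) then 2%:R^-1 *: (A + 1%:M) else 0)
  else if (c == 0%N :> nat) then (l.+1%:R)^-1 *: A
  else if (c == l.-1 :> nat) then (l%:R / l.+1%:R) *: 1%:M
  else 0.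

Definition Dmat (T n : nat) (A : 'M[R]_n) : 'M[R]_(stk T n) :=
  \mxblock_(l < T, c < T) Dblk A l c.

Definition inQ (T n : nat) (beta : R) (D : 'M[R]_(stk T n)) : Prop :=
  exists A, inF beta A /\ D = Dmat T A.

Definition Emat (T n : nat) (beta : R) : 'M[R]_(stk T n) := Dmat T (Bmat n beta).

Definition blk1 (T n : nat) (D : 'M[R]_(stk T n)) : 'M[R]_(stk T n + stk T n) :=
  block_mx D 0 0 1%:M.
Definition blk2 (T n : nat) (D : 'M[R]_(stk T n)) : 'M[R]_(stk T n + stk T n) :=
  block_mx 1%:M 0 0 D.

Definition inS (T n : nat) (beta1 beta2 : R) (H : 'M[R]_(stk T n + stk T n)) : Prop :=
  (exists D1, inQ beta1 D1 /\ H = blk1 D1) \/ (exists D2, inQ beta2 D2 /\ H = blk2 D2).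

(* product U_r ... U_1 of the list [:: U_r; ...; U_1] *)
Definition mxprod (m : nat) (s : seq 'M[R]_m) : 'M[R]_m :=
  foldr (fun U P => U *m P) 1%:M s.

Definition inV (T n : nat) (beta1 beta2 : R) (H : 'M[R]_(stk T n + stk T n)) : Prop :=
  exists s : seq 'M[R]_(stk T n + stk T n),
    s != [::] /\ (forall U, U \in s -> inS beta1 beta2 U) /\ H = mxprod s.

Definition zpart (T n : nat) (z : 'cV[R]_(stk T n + stk T n)) (j : bool) : 'cV[R]_(stk T n) :=
  if j then dsubmx z else usubmx z.   (* j = false : z^1, j = true : z^2 *)
Definition zblk (T n : nat) (w : 'cV[R]_(stk T n)) (t : 'I_T) : 'cV[R]_n :=
  submxcol w t.

Definition norm1 (n : nat) (v : 'cV[R]_n) : R := \sum_i `|v i 0|.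

(* ||w||_T = max_t ||w_t||_1  (all terms are >= 0, so 0 is a neutral start) *)
Definition normT (T n : nat) (w : 'cV[R]_(stk T n)) : R :=
  \big[Num.max/0]_(t < T) norm1 (zblk w t).

Definition normz (T n : nat) (z : 'cV[R]_(stk T n + stk T n)) : R :=
  Num.max (normT (zpart z false)) (normT (zpart z true)).

Definition inW (T n : nat) (z : 'cV[R]_(stk T n + stk T n)) : Prop :=
  forall (j : bool) (t : 'I_T), \sum_i (zblk (zpart z j) t) i 0 = 0.

End Defs.

From HB Require Import structures.
From mathcomp Require Import all_boot all_order all_algebra.
From mathcomp Require Import ring lra.
Import Order.TTheory GRing.Theory Num.Theory.
Local Open Scope ring_scope.
Set Implicit Arguments. Unset Strict Implicit. Unset Printing Implicit Defensive.

(* Each factor in S acts on each half z^j of z either as the identity or as a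
   matrix D(A), so everything reduces to D(A) acting on vectors whose n-blocks
   have zero sum.  Block l of D(A) w is the convex combination
   (1/l) A w_1 + ((l-1)/l) w_(l-1).  Every A_b is column stochastic, hence
   preserves sums and is an l1-contraction, and B^j acts on zero-sum vectors
   as multiplication by beta^j; so every block of D(A_b) w has l1-norm at most
   ||w||_T, and every block of E^j w at most (1 - (1 - beta^j)/l) ||w||_T.
   A product containing both E^1 and E^2 therefore strictly shrinks both
   halves of a non-zero z. *)

Section Contraction.
Variable R : realFieldType.
Implicit Types (n : nat).

Definition sumv n (v : 'cV[R]_n) : R := \sum_i v i 0.

Lemma sumvD n (u v : 'cV[R]_n) : sumv (u + v) = sumv u + sumv v.
Proof. by rewrite /sumv -big_split; apply: eq_bigr => i _; rewrite mxE. Qed.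

Lemma sumvZ n a (v : 'cV[R]_n) : sumv (a *: v) = a * sumv v.
Proof. by rewrite /sumv mulr_sumr; apply: eq_bigr => i _; rewrite mxE. Qed.

Lemma norm1_ge0 n (v : 'cV[R]_n) : 0 <= norm1 v.
Proof. by apply: sumr_ge0 => i _; apply: normr_ge0. Qed.

Lemma norm10 n : norm1 (0 : 'cV[R]_n) = 0.
Proof. by rewrite /norm1 big1 // => i _; rewrite mxE normr0. Qed.

Lemma norm1D n (u v : 'cV[R]_n) : norm1 (u + v) <= norm1 u + norm1 v.
Proof. by rewrite /norm1 -big_split; apply: ler_sum => i _; rewrite mxE ler_normD. Qed.

Lemma norm1Z n a (v : 'cV[R]_n) : norm1 (a *: v) = `|a| * norm1 v.
Proof. by rewrite /norm1 mulr_sumr; apply: eq_bigr => i _; rewrite mxE normrM. Qed.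

Lemma norm1_gt0 n (v : 'cV[R]_n) : v != 0 -> 0 < norm1 v.
Proof.
move=> v_neq0; have [i vi_neq0] : exists i, v i 0 != 0.
  apply/existsP; apply: contraR v_neq0 => /existsPn v0; apply/eqP/matrixP => i j.
  by rewrite ord1 mxE; apply/eqP/negPn.
rewrite /norm1 (bigD1 i) //= ltr_pwDl ?normr_gt0 //.
by apply: sumr_ge0 => k _; apply: normr_ge0.
Qed.

Lemma sum_add_mean n (x : 'I_n -> R) (c : R) : (0 < n)%N ->
  \sum_i (x i + n%:R^-1 * c) = \sum_i x i + c.
Proof.
move=> n_gt0; rewrite big_split sumr_const card_ord -[_ *+ n]mulr_natl mulrA.
by rewrite mulfV ?mul1r // pnatr_eq0 -lt0n.
Qed.

Lemma Amat_mulE n (b : 'rV[R]_n) (v : 'cV[R]_n) i :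
  (Amat b *m v) i 0 = b 0 i * v i 0 + n%:R^-1 * \sum_j (1 - b 0 j) * v j 0.
Proof.
rewrite /Amat mulmxDl mxE mul_diag_mx mxE -scalemxAl mxE; congr (_ + _ * _).
rewrite -mulmxA mxE big_ord1 /evec mxE mul1r mxE.
by apply: eq_bigr => j _; rewrite !mxE.
Qed.

Lemma sumv_Amat n (b : 'rV[R]_n) (v : 'cV[R]_n) : (0 < n)%N ->
  sumv (Amat b *m v) = sumv v.
Proof.
move=> n_gt0; rewrite /sumv; under eq_bigr do rewrite Amat_mulE.
by rewrite sum_add_mean // -big_split; apply: eq_bigr => i _ /=; ring.
Qed.

Lemma norm1_Amat n (b : 'rV[R]_n) (v : 'cV[R]_n) : (0 < n)%N ->
  (forall i, 0 <= b 0 i <= 1) -> norm1 (Amat b *m v) <= norm1 v.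
Proof.
move=> n_gt0 b01; rewrite /norm1; under eq_bigr do rewrite Amat_mulE.
have /le_trans -> // : \sum_i `|b 0 i * v i 0 + n%:R^-1 * \sum_j (1 - b 0 j) * v j 0|
    <= \sum_i (b 0 i * `|v i 0| + n%:R^-1 * \sum_j (1 - b 0 j) * `|v j 0|).
  apply: ler_sum => i _; apply: le_trans (ler_normD _ _) _.
  have [bi_ge0 bi_le1] := andP (b01 i).
  apply: lerD; first by rewrite normrM ger0_norm.
  rewrite normrM ger0_norm ?invr_ge0 ?ler0n // ler_wpM2l ?invr_ge0 ?ler0n //.
  apply: le_trans (ler_norm_sum _ _ _) _; apply: ler_sum => j _.
  by rewrite normrM ger0_norm // subr_ge0; case/andP: (b01 j).
rewrite sum_add_mean // -big_split le_eqVlt; apply/orP; left.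
by apply/eqP/eq_bigr => i _ /=; ring.
Qed.

Lemma Bmat_mul_sum0 n (beta : R) (v : 'cV[R]_n) :
  sumv v = 0 -> Bmat n beta *m v = beta *: v.
Proof.
move=> v_sum0; rewrite /Bmat mulmxDl -!scalemxAl mul1mx -mulmxA.
have -> : (evec R n)^T *m v = 0.
  apply/matrixP => i j; rewrite !ord1 !mxE -[RHS]v_sum0.
  by apply: eq_bigr => k _; rewrite !mxE mul1r.
by rewrite mulmx0 scaler0 addr0.
Qed.

Lemma convex_comb_le (l : nat) (g a b M : R) : 0 <= g -> 0 <= a <= M -> b <= M ->
  l.+1%:R^-1 * (g * a) + l%:R / l.+1%:R * b <= M - (1 - g) * M / l.+1%:R.
Proof.
move=> g_ge0 /andP[a_ge0 a_leM] b_leM.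
have k_gt0 : 0 < l.+1%:R :> R by rewrite ltr0Sn.
have /le_trans -> // : l.+1%:R^-1 * (g * a) + l%:R / l.+1%:R * b
    <= l.+1%:R^-1 * (g * M) + l%:R / l.+1%:R * M.
  by rewrite lerD ?ler_wpM2l ?divr_ge0 ?invr_ge0 ?ler0n // ltW.
rewrite le_eqVlt; apply/orP; left; apply/eqP; rewrite -natr1; field.
by rewrite natr1 gt_eqF.
Qed.

Section Blocks.
Variables T n : nat.
Implicit Types (w : 'cV[R]_(stk T n)) (D : 'M[R]_(stk T n)).

Lemma normT_ge0 w : 0 <= normT w.
Proof.
apply: (big_ind (fun x => 0 <= x)) => // [x y x_ge0 y_ge0|t _].
  by rewrite le_max x_ge0.
exact: norm1_ge0.
Qed.

Lemma norm1_zblk_le w t : norm1 (zblk w t) <= normT w.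
Proof. by rewrite /normT (bigD1 t) //= le_max lexx. Qed.

Lemma normT_le w M : 0 <= M -> (forall t, norm1 (zblk w t) <= M) -> normT w <= M.
Proof.
move=> M_ge0 wM; apply: (big_ind (fun x => x <= M)) => // x y xM yM.
by rewrite ge_max xM yM.
Qed.

Lemma normT_lt w M : 0 < M -> (forall t, norm1 (zblk w t) < M) -> normT w < M.
Proof.
move=> M_gt0 wM; apply: (big_ind (fun x => x < M)) => // x y xM yM.
by rewrite gt_max xM yM.
Qed.

Lemma normT0 : normT (0 : 'cV[R]_(stk T n)) = 0.
Proof.
apply/eqP; rewrite eq_le normT_ge0 andbT; apply: normT_le => // t.
by rewrite /zblk submxcol0 norm10.
Qed.

Lemma normT_gt0 w : w != 0 -> 0 < normT w.
Proof.
move=> w_neq0; have [t wt_neq0] : exists t, zblk w t != 0.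
  apply/existsP; apply: contraR w_neq0 => /existsPn w0; apply/eqP.
  rewrite -(submxcolK w) -(@mxcol0 R T (fun=> n) 1); apply: eq_mxcol => t.
  by apply/eqP; rewrite -[_ == _]negbK w0.
exact: lt_le_trans (norm1_gt0 wt_neq0) (norm1_zblk_le w t).
Qed.

(* With 0-based indices: for l = 0 the second coefficient vanishes, and for
   l = 1 both terms sit in column 0 ([l.-1] is truncated). *)
Lemma DblkE (A : 'M[R]_n) (l c : 'I_T) :
  Dblk A l c = (if c == 0%N :> nat then l.+1%:R^-1 *: A else 0)
             + (if c == l.-1 :> nat then (l%:R / l.+1%:R) *: 1%:M else 0).
Proof.
rewrite /Dblk; case: (nat_of_ord l) => [|[|l']]; case: (nat_of_ord c) => [|c'] /=.
- by rewrite invr1 scale1r mul0r scale0r addr0.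
- by rewrite addr0.
- by rewrite scalerDr mul1r.
- by rewrite addr0.
- by rewrite addr0.
- by rewrite add0r.
Qed.

Definition first_blk (l : 'I_T) : 'I_T := Ordinal (leq_ltn_trans (leq0n l) (ltn_ord l)).
Definition prev_blk (l : 'I_T) : 'I_T := Ordinal (leq_ltn_trans (leq_pred l) (ltn_ord l)).

Lemma zblk_Dmat (A : 'M[R]_n) w l : zblk (Dmat T A *m w) l =
  l.+1%:R^-1 *: (A *m zblk w (first_blk l)) + (l%:R / l.+1%:R) *: zblk w (prev_blk l).
Proof.
rewrite /zblk /Dmat -{1}(submxcolK w) mul_mxblock_mxrow mxcolK.
under eq_bigr do rewrite DblkE mulmxDl !(fun_if (mulmx^~ _)) !mul0mx.
rewrite big_split /= -!big_mkcond (big_pred1 (first_blk l)) ?(big_pred1 (prev_blk l)) //.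
by rewrite -!scalemxAl mul1mx.
Qed.

Definition zero_sum_blocks w := forall t, sumv (zblk w t) = 0.

Lemma zero_sum_Dmat (A : 'M[R]_n) w : (forall v, sumv v = 0 -> sumv (A *m v) = 0) ->
  zero_sum_blocks w -> zero_sum_blocks (Dmat T A *m w).
Proof.
by move=> A_sum0 w_sum0 l; rewrite zblk_Dmat sumvD !sumvZ A_sum0 // !w_sum0 !mulr0 addr0.
Qed.

Lemma norm1_zblk_Dmat (g : R) (A : 'M[R]_n) w l : 0 <= g ->
  (forall v, sumv v = 0 -> norm1 (A *m v) <= g * norm1 v) -> zero_sum_blocks w ->
  norm1 (zblk (Dmat T A *m w) l) <= normT w - (1 - g) * normT w / l.+1%:R.
Proof.
move=> g_ge0 A_le w_sum0; rewrite zblk_Dmat.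
apply: le_trans (norm1D _ _) _; rewrite !norm1Z !ger0_norm ?divr_ge0 ?invr_ge0 ?ler0n //.
apply: le_trans (lerD (ler_wpM2l _ (A_le _ (w_sum0 _))) (lexx _)) _.
  by rewrite invr_ge0 ler0n.
by rewrite convex_comb_le ?norm1_ge0 ?norm1_zblk_le.
Qed.

Definition nonexpansive D :=
  forall w, zero_sum_blocks w -> zero_sum_blocks (D *m w) /\ normT (D *m w) <= normT w.

Definition strictly_contractive D :=
  forall w, zero_sum_blocks w -> w != 0 -> normT (D *m w) < normT w.

Lemma nonexpansive1 : nonexpansive 1%:M.
Proof. by move=> w w_sum0; rewrite mul1mx. Qed.

Lemma nonexpansive_mul D1 D2 : nonexpansive D1 -> nonexpansive D2 -> nonexpansive (D1 *m D2).
Proof.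
move=> ne1 ne2 w w_sum0; rewrite -mulmxA.
have [D2w_sum0 D2w_le] := ne2 w w_sum0; have [D12w_sum0 D12w_le] := ne1 _ D2w_sum0.
by split=> //; apply: le_trans D2w_le.
Qed.

Lemma nonexpansive_Dmat (A : 'M[R]_n) :
  (forall v, sumv v = 0 -> sumv (A *m v) = 0) ->
  (forall v, sumv v = 0 -> norm1 (A *m v) <= norm1 v) -> nonexpansive (Dmat T A).
Proof.
move=> A_sum0 A_le w w_sum0; split; first exact: zero_sum_Dmat.
apply: normT_le (normT_ge0 w) _ => l.
have A_le1 v : sumv v = 0 -> norm1 (A *m v) <= 1 * norm1 v by rewrite mul1r; apply: A_le.
by have := norm1_zblk_Dmat l ler01 A_le1 w_sum0; rewrite subrr !mul0r subr0.
Qed.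

Lemma nonexpansive_inF (beta : R) (A : 'M[R]_n) : (0 < n)%N -> 0 <= beta <= 1 ->
  inF beta A -> nonexpansive (Dmat T A).
Proof.
move=> n_gt0 /andP[beta_ge0 beta_le1] [b [b_beta ->]].
have b01 i : 0 <= b 0 i <= 1.
  by case: (b_beta i) => ->; rewrite ?beta_ge0 ?beta_le1 ?ler01 ?lexx.
by apply: nonexpansive_Dmat => v v_sum0; [rewrite sumv_Amat | apply: norm1_Amat].
Qed.

Lemma nonexpansive_Emat (beta : R) : 0 <= beta <= 1 -> nonexpansive (Emat T n beta).
Proof.
move=> /andP[beta_ge0 beta_le1]; apply: nonexpansive_Dmat => v v_sum0.
  by rewrite Bmat_mul_sum0 // sumvZ v_sum0 mulr0.
by rewrite Bmat_mul_sum0 // norm1Z ger0_norm // ler_piMl ?norm1_ge0.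
Qed.

Lemma strictly_contractive_Emat (beta : R) : 0 <= beta < 1 ->
  strictly_contractive (Emat T n beta).
Proof.
move=> /andP[beta_ge0 beta_lt1] w w_sum0 w_neq0.
have B_le v : sumv v = 0 -> norm1 (Bmat n beta *m v) <= beta * norm1 v.
  by move=> v_sum0; rewrite Bmat_mul_sum0 // norm1Z ger0_norm.
apply: normT_lt (normT_gt0 w_neq0) _ => l.
apply: le_lt_trans (norm1_zblk_Dmat l beta_ge0 B_le w_sum0) _.
by rewrite gtrBl divr_gt0 ?ltr0Sn // mulr_gt0 ?subr_gt0 ?normT_gt0.
Qed.

Lemma strictly_contractive_sandwich D1 E D2 :
  nonexpansive D1 -> nonexpansive E -> strictly_contractive E -> nonexpansive D2 ->
  strictly_contractive (D1 *m E *m D2).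
Proof.
move=> ne1 neE ltE ne2 w w_sum0 w_neq0; rewrite -!mulmxA.
have [D2w_sum0 D2w_le] := ne2 w w_sum0.
have [->|D2w_neq0] := eqVneq (D2 *m w) 0.
  by rewrite !mulmx0 normT0 normT_gt0.
have [ED2w_sum0 _] := neE _ D2w_sum0.
apply: le_lt_trans (ne1 _ ED2w_sum0).2 _.
exact: lt_le_trans (ltE _ D2w_sum0 D2w_neq0) D2w_le.
Qed.

Implicit Types (z : 'cV[R]_(stk T n + stk T n)) (U : 'M[R]_(stk T n + stk T n)).

Lemma zpart_blk1 D z j : zpart (blk1 D *m z) j = if j then zpart z j else D *m zpart z j.
Proof.
by case: j; rewrite /zpart /blk1 -{1}(vsubmxK z) mul_block_col ?col_mxKu ?col_mxKd
  !mul0mx ?addr0 ?add0r ?mul1mx.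
Qed.

Lemma zpart_blk2 D z j : zpart (blk2 D *m z) j = if j then D *m zpart z j else zpart z j.
Proof.
by case: j; rewrite /zpart /blk2 -{1}(vsubmxK z) mul_block_col ?col_mxKu ?col_mxKd
  !mul0mx ?addr0 ?add0r ?mul1mx.
Qed.

Lemma normT_zpart_le z j : normT (zpart z j) <= normz z.
Proof. by case: j; rewrite /normz le_max lexx ?orbT. Qed.

Lemma normz_gt0 z : z != 0 -> 0 < normz z.
Proof.
apply: contraNT; rewrite /normz -leNgt ge_max => /andP[z1_le0 z2_le0].
have zpart0 j : zpart z j = 0.
  apply: contraTeq (if j then z2_le0 else z1_le0) => /normT_gt0.
  by rewrite -ltNge; case: j.
rewrite -(vsubmxK z) -[usubmx z]/(zpart z false) -[dsubmx z]/(zpart z true).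
by rewrite !zpart0 col_mx0.
Qed.

Definition blockwise U := forall j : bool,
  exists2 D, nonexpansive D & forall z, zpart (U *m z) j = D *m zpart z j.

Lemma blockwise_blk1 D : nonexpansive D -> blockwise (blk1 D).
Proof.
move=> neD [|].
- by exists 1%:M => [|z]; [apply: nonexpansive1 | rewrite zpart_blk1 mul1mx].
- by exists D => // z; rewrite zpart_blk1.
Qed.

Lemma blockwise_blk2 D : nonexpansive D -> blockwise (blk2 D).
Proof.
move=> neD [|].
- by exists D => // z; rewrite zpart_blk2.
- by exists 1%:M => [|z]; [apply: nonexpansive1 | rewrite zpart_blk2 mul1mx].
Qed.

Lemma blockwise_mul U1 U2 : blockwise U1 -> blockwise U2 -> blockwise (U1 *m U2).
Proof.
move=> bw1 bw2 j; have [D1 ne1 U1E] := bw1 j; have [D2 ne2 U2E] := bw2 j.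
exists (D1 *m D2) => [|z]; first exact: nonexpansive_mul.
by rewrite -mulmxA U1E U2E mulmxA.
Qed.

Lemma mxprod_cat (s1 s2 : seq 'M[R]_(stk T n + stk T n)) :
  mxprod (s1 ++ s2) = mxprod s1 *m mxprod s2.
Proof. by elim: s1 => [|U s1 IH] /=; rewrite ?mul1mx // IH mulmxA. Qed.

Lemma blockwise_mxprod s : (forall U, U \in s -> blockwise U) -> blockwise (mxprod s).
Proof.
elim: s => [_ j|U s IH bw_s].
  by exists 1%:M => [|z]; [apply: nonexpansive1 | rewrite !mul1mx].
apply: blockwise_mul; first by apply: bw_s; rewrite mem_head.
by apply: IH => V V_s; apply: bw_s; rewrite in_cons V_s orbT.
Qed.

Lemma blockwise_inW U z : blockwise U -> inW z -> inW (U *m z).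
Proof. by move=> bwU z_W j; have [D neD ->] := bwU j; apply: (neD _ (z_W j)).1. Qed.

Lemma blockwise_normz U z : blockwise U -> inW z -> normz (U *m z) <= normz z.
Proof.
move=> bwU z_W; rewrite [X in X <= _]/normz ge_max.
have zpart_le j : normT (zpart (U *m z) j) <= normz z.
  have [D neD ->] := bwU j.
  exact: le_trans (neD _ (z_W j)).2 (normT_zpart_le z j).
by rewrite !zpart_le.
Qed.

Lemma normT_zpart_mxprod_lt s U E j z : (forall V, V \in s -> blockwise V) ->
  U \in s -> nonexpansive E -> strictly_contractive E ->
  (forall y, zpart (U *m y) j = E *m zpart y j) ->
  inW z -> z != 0 -> normT (zpart (mxprod s *m z) j) < normz z.
Proof.
move=> bw_s U_s neE ltE UE z_W z_neq0.
case/splitPr: U_s bw_s => s1 s2 bw_s.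
have bw_s1 V : V \in s1 -> blockwise V.
  by move=> V_s1; apply: bw_s; rewrite mem_cat V_s1.
have bw_s2 V : V \in s2 -> blockwise V.
  by move=> V_s2; apply: bw_s; rewrite mem_cat in_cons V_s2 !orbT.
have [D1 ne1 D1E] := blockwise_mxprod bw_s1 j.
have [D2 ne2 D2E] := blockwise_mxprod bw_s2 j.
rewrite mxprod_cat /= -!mulmxA D1E UE D2E !mulmxA.
have [zj0|zj_neq0] := eqVneq (zpart z j) 0.
  by rewrite zj0 mulmx0 normT0 normz_gt0.
apply: lt_le_trans (normT_zpart_le z j).
exact: (strictly_contractive_sandwich ne1 neE ltE ne2 (z_W j) zj_neq0).
Qed.

Lemma inS_blockwise (beta1 beta2 : R) U : (0 < n)%N ->
  0 <= beta1 <= 1 -> 0 <= beta2 <= 1 -> inS beta1 beta2 U -> blockwise U.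
Proof.
move=> n_gt0 beta1_01 beta2_01 [[D [[A [A_F ->]] ->]]|[D [[A [A_F ->]] ->]]].
- exact/blockwise_blk1/(nonexpansive_inF n_gt0 beta1_01 A_F).
- exact/blockwise_blk2/(nonexpansive_inF n_gt0 beta2_01 A_F).
Qed.

End Blocks.
End Contraction.

Unset Implicit Arguments.

Theorem lemma5 (R : realFieldType) (n T : nat) (beta1 beta2 : R) :
  (1 <= n)%N -> (1 <= T)%N ->
  0 < beta1 < 1 -> 0 < beta2 < 1 ->
  (forall H : 'M[R]_(stk T n + stk T n), inV beta1 beta2 H ->
     forall z, inW z -> inW (H *m z))
  /\
  (forall H : 'M[R]_(stk T n + stk T n), inV beta1 beta2 H ->
     forall z, inW z -> normz (H *m z) <= normz z)
  /\
  (forall s : seq 'M[R]_(stk T n + stk T n),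
     (forall U, U \in s -> inS beta1 beta2 U) ->
     blk1 (@Emat R T n beta1) \in s -> blk2 (@Emat R T n beta2) \in s ->
     forall z, inW z -> z != 0 -> normz (mxprod s *m z) < normz z).
Proof.
move=> n_gt0 _ /andP[beta1_gt0 beta1_lt1] /andP[beta2_gt0 beta2_lt1].
have beta1_01 : 0 <= beta1 <= 1 by rewrite !ltW.
have beta2_01 : 0 <= beta2 <= 1 by rewrite !ltW.
have bw_s (s : seq 'M[R]_(stk T n + stk T n)) :
  (forall U, U \in s -> inS beta1 beta2 U) -> forall U, U \in s -> blockwise U.
  by move=> s_S U U_s; apply: inS_blockwise n_gt0 beta1_01 beta2_01 (s_S U U_s).
split; [|split].
- by move=> _ [s [_ [s_S ->]]] z; apply/blockwise_inW/blockwise_mxprod/bw_s.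
- by move=> _ [s [_ [s_S ->]]] z; apply/blockwise_normz/blockwise_mxprod/bw_s.
move=> s s_S E1_s E2_s z z_W z_neq0; rewrite /normz gt_max.
apply/andP; split.
- apply: normT_zpart_mxprod_lt (bw_s s s_S) E1_s _ _ _ z_W z_neq0.
  + exact: nonexpansive_Emat beta1_01.
  + by apply: strictly_contractive_Emat; rewrite ltW.
  + by move=> y; rewrite zpart_blk1.
- apply: normT_zpart_mxprod_lt (bw_s s s_S) E2_s _ _ _ z_W z_neq0.
  + exact: nonexpansive_Emat beta2_01.
  + by apply: strictly_contractive_Emat; rewrite ltW.
  + by move=> y; rewrite zpart_blk2.
Qed.
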